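(* Let $\lambda$ be a partition, $R:=R_\lambda$, and let $\gamma$ be a gapless $R$-tuple. Then the $\lambda$-row end max tableau $M:=M_\lambda(\gamma)$ is a $\lambda$-key. Moreover, for each $h\in[r]$, setting $j:=\lambda_{q_{h+1}}$ (so that column $j+1$ has length $q_h$ and column $j$ has length $q_{h+1}$, column $0$ being the latent column when $j=0$), one has $M_{j+1}(q_h)=\gamma_{q_h}$, and if $s\ge0$ denotes the number of elements of $B(M_j)\setminus B(M_{j+1})$ that are less than $\gamma_{q_h}$, then these $s$ elements are exactly the $s$ largest elements of $[\gamma_{q_h}]\setminus B(M_{j+1})$.
   Context: Fix $n\ge1$; $[m]=\{1,\dots,m\}$. For $R\subseteq[n-1]$ with elements $q_1<\dots<q_r$, set $q_0:=0$, $q_{r+1}:=n$, $p_h:=q_h-q_{h-1}$; the $h$-th carrel is $\{q_{h-1}+1,\dots,q_h\}$. An $R$-tuple is an $n$-tuple with entries in $[n]$; it is upper if $\nu_i\ge i$ for all $i$ and $R$-increasing if strictly increasing on each carrel. A gapless $R$-tuple is an upper $R$-increasing $R$-tuple $\gamma$ such that whenever $h\in[r]$ has $\gamma_{q_h}>\gamma_{q_h+1}$, setting $s:=\gamma_{q_h}-\gamma_{q_h+1}+1$ one has $s\le p_{h+1}$ and $\gamma_{q_h+t}=\gamma_{q_h}-s+t$ for all $t\in[s]$. A partition is $\lambda=(\lambda_1\ge\cdots\ge\lambda_n\ge0)\in\mathbb{Z}^n$; its shape has boxes $(j,i)$ (column $j$, row $i$) with $1\le j\le\lambda_1$, $1\le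 i\le\zeta_j$, where $\zeta_j:=\#\{i:\lambda_i\ge j\}$ is the length of column $j$. $R_\lambda:=\{\zeta_j:j\in[\lambda_1],\zeta_j<n\}$. A tableau of shape $\lambda$ is a filling of the boxes with values in $[n]$, strictly increasing down each column and weakly increasing left to right along rows; $\mathcal{T}_\lambda$ is the set of these, partially ordered entrywise. $T_j(i)$ is the entry in column $j$, row $i$, and $B(T_j)$ is the set of entries of column $j$. By convention every tableau has a latent column $0$ with $T_0(i)=i$ for $i\in[n]$. A $\lambda$-key is $Y\in\mathcal{T}_\lambda$ with $B(Y_l)\supseteq B(Y_j)$ whenever $1\le l\le j\le\lambda_1$. The $\lambda$-row end list of $T\in\mathcal{T}_\lambda$ is the $n$-tuple $\omega$ with $\omega_i:=T_{\lambda_i}(i)$ (using the latent column if $\lambda_i=0$). For an upper $R_\lambda$-increasing $R_\lambda$-tuple $\alpha$, the set of $T\in\mathcal{T}_\lambda$ with $\lambda$-row end list $\alpha$ is nonempty and closed under entrywise maximum; its maximum element is the $\lambda$-row end max tableau $M_\lambda(\alpha)$. *)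

(* All n-tuples / columns are 1-indexed functions nat -> nat;
   only the values at the relevant indices matter. *)
From mathcomp Require Import all_boot.
Set Implicit Arguments. Unset Strict Implicit. Unset Printing Implicit Defensive.

Definition qseq (n : nat) (R : pred nat) : seq nat := [seq q <- iota 1 n.-1 | R q].
Definition rr (n : nat) (R : pred nat) : nat := size (qseq n R).
(* q_0 = 0, q_h = h-th smallest element of R (1<=h<=r), q_{r+1} = n *)
Definition qq (n : nat) (R : pred nat) (h : nat) : nat :=
  if h == 0 then 0 else nth n (qseq n R) h.-1.
Definition pp (n : nat) (R : pred nat) (h : nat) : nat := qq n R h - qq n R h.-1.

Definition is_Rtuple (n : nat) (g : nat -> nat) : Prop :=
  forall i, 1 <= i <= n -> 1 <= g i <= n.
Definition upper (n : nat) (g : nat -> nat) : Prop :=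
  forall i, 1 <= i <= n -> i <= g i.
Definition R_increasing (n : nat) (R : pred nat) (g : nat -> nat) : Prop :=
  forall h, 1 <= h <= (rr n R).+1 ->
  forall i i', qq n R h.-1 < i -> i < i' -> i' <= qq n R h -> g i < g i'.

Definition gapless (n : nat) (R : pred nat) (g : nat -> nat) : Prop :=
  [/\ is_Rtuple n g, upper n g, R_increasing n R g &
   forall h, 1 <= h <= rr n R ->
     g (qq n R h).+1 < g (qq n R h) ->
     let s := g (qq n R h) - g (qq n R h).+1 + 1 in
     s <= pp n R h.+1 /\
     (forall t, 1 <= t <= s -> g (qq n R h + t) = g (qq n R h) + t - s)].

Definition is_partition (n : nat) (lam : nat -> nat) : Prop :=
  forall i, 1 <= i < n -> lam i.+1 <= lam i.

(* zeta_j = #{i in [n] : lambda_i >= j}, the length of column j (zeta_0 = n) *)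
Definition zeta (n : nat) (lam : nat -> nat) (j : nat) : nat :=
  count (fun i => j <= lam i) (iota 1 n).

Definition Rlam (n : nat) (lam : nat -> nat) : pred nat :=
  fun q => (q < n) && has (fun j => zeta n lam j == q) (iota 1 (lam 1)).

(* A filling T : column j -> row i -> entry.  Entry accessor including the
   latent column 0 with T_0(i) = i. *)
Definition ent (T : nat -> nat -> nat) (j i : nat) : nat :=
  if j == 0 then i else T j i.

Definition is_tableau (n : nat) (lam : nat -> nat) (T : nat -> nat -> nat) : Prop :=
  [/\ forall j i, 1 <= j <= lam 1 -> 1 <= i <= zeta n lam j -> 1 <= T j i <= n,
      forall j i, 1 <= j <= lam 1 -> 1 <= i -> i < zeta n lam j -> T j i < T j i.+1 &
      forall j i, 1 <= j -> j < lam 1 -> 1 <= i <= zeta n lam j.+1 -> T j i <= T j.+1 i].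

Definition tab_le (n : nat) (lam : nat -> nat) (T U : nat -> nat -> nat) : Prop :=
  forall j i, 1 <= j <= lam 1 -> 1 <= i <= zeta n lam j -> T j i <= U j i.

Definition colB (n : nat) (lam : nat -> nat) (T : nat -> nat -> nat) (j : nat) : seq nat :=
  [seq ent T j i | i <- iota 1 (zeta n lam j)].

Definition is_key (n : nat) (lam : nat -> nat) (Y : nat -> nat -> nat) : Prop :=
  is_tableau n lam Y /\
  forall l j, 1 <= l -> l <= j -> j <= lam 1 -> {subset colB n lam Y j <= colB n lam Y l}.

Definition rowend (lam : nat -> nat) (T : nat -> nat -> nat) (i : nat) : nat :=
  ent T (lam i) i.

Definition is_rowend_max (n : nat) (lam : nat -> nat) (alpha : nat -> nat)
  (M : nat -> nat -> nat) : Prop :=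
  [/\ is_tableau n lam M,
      (forall i, 1 <= i <= n -> rowend lam M i = alpha i) &
      forall T, is_tableau n lam T -> (forall i, 1 <= i <= n -> rowend lam T i = alpha i) ->
        tab_le n lam T M].

From Pilot Require Import Defs.
From mathcomp Require Import all_boot zify.

(* The row end max tableau has the closed form
     M_j(i) = i + min_{i <= k <= zeta_j} (g_k - k).
   A column gains at least one per row and row k ends with g_k in column lambda_k >= j, so every
   tableau with row end list g lies below this formula; conversely, as g is upper and R-increasing,
   the formula is itself such a tableau.
   Take consecutive carrel ends a = q_h < b = q_{h+1} and j = lambda_b, so that columns j + 1 and j
   have lengths a and b. Since g gains at least one per row on (a, b], column j equals
   min(M_{j+1}(i), i + d) on rows i <= a, where d = g_{a+1} - a - 1, and g on rows a < i <= b.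
   Hence column j contains column j + 1, and its new entries below g_a are the values i + d on the
   rows where column j + 1 has left that diagonal, together with the run of g given by the gapless
   condition; between them they leave no gap below g_a, so they are the largest elements of [g_a]
   missing from column j + 1. *)

Lemma filter_upclosed_drop (P : pred nat) (X : seq nat) : sorted ltn X ->
  (forall x y, x \in X -> y \in X -> P x -> x < y -> P y) ->
  filter P X = drop (size X - count P X) X.
Proof.
elim: X => [|x X IH] //= sX upP.
have sX' : sorted ltn X := path_sorted sX.
have x_min : all (ltn x) X := order_path_min ltn_trans sX.
case Px: (P x) => /=.
- have allP : all P X.
    apply/allP => y yX; apply: (upP x y) => //; rewrite ?inE ?eqxx ?yX ?orbT //.
    exact: (allP x_min).
  move: (allP); rewrite all_count => /eqP cntP.
  by rewrite (all_filterP allP) cntP add1n subnn drop0.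
- rewrite add0n subSn ?count_size //= IH // => u v uX vX.
  by apply: upP; rewrite inE ?uX ?vX orbT.
Qed.

Lemma diff_suffix_complement (B C : seq nat) (m n : nat) :
  m <= n -> m \in B -> (forall x, x \in C -> 0 < x) ->
  (forall x y, x \in C -> x \notin B -> x <= m -> y \notin B -> x < y <= m -> y \in C) ->
  let S := [seq x <- iota 1 n | [&& x \in C, x \notin B & x < m]] in
  let X := [seq x <- iota 1 m | x \notin B] in
  S = drop (size X - size S) X.
Proof.
move=> le_mn mB C_gt0 upC S X.
have sX : sorted ltn X := sorted_filter ltn_trans _ (iota_ltn_sorted 1 m).
have ES : S = filter (mem C) X.
  apply: (irr_sorted_eq ltn_trans ltnn).
  - exact: sorted_filter ltn_trans _ _ (iota_ltn_sorted 1 n).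
  - exact: sorted_filter ltn_trans _ _ sX.
  move=> x; rewrite !mem_filter !mem_iota /=.
  case xC: (x \in C) => //=; have := C_gt0 x xC.
  case: (eqVneq x m) => [->|ne_xm]; first by rewrite mB.
  by case: (x \in B) => //=; lia.
rewrite ES size_filter; apply: filter_upclosed_drop => // x y.
rewrite !mem_filter !mem_iota => /andP[xB /andP[_ xm]] /andP[yB /andP[_ ym]] xC lt_xy.
apply: (upC x) => //; lia.
Qed.

Fixpoint range_min (c : nat -> nat) (a l : nat) : nat :=
  if l is l'.+1 then minn (c a) (range_min c a.+1 l') else c a.

Lemma range_min_le c a l k : a <= k <= a + l -> range_min c a l <= c k.
Proof.
elim: l a => [|l IH] a /=; first by move=> ak; have -> : k = a by lia.
move=> ak; case: (eqVneq k a) => [->|ne_ka]; first exact: geq_minl.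
have := IH a.+1 ltac:(lia); lia.
Qed.

Lemma range_minP c a l : exists2 k, a <= k <= a + l & range_min c a l = c k.
Proof.
elim: l a => [|l IH] a /=; first by exists a; rewrite ?addn0 ?leqnn.
have [k ak ->] := IH a.+1.
case: (leqP (c a) (c k)) => le_ck; [exists a | exists k]; lia.
Qed.

Lemma downclosed_le (P : pred nat) N :
  (forall k, 1 <= k < N -> P k.+1 -> P k) ->
  forall m k, 1 <= k <= m -> m <= N -> P m -> P k.
Proof.
move=> downP; elim=> [|m IH] k km mN Pm; first lia.
case: (eqVneq k m.+1) => [->//|ne_km].
by apply: IH; [lia | lia | apply: downP => //; lia].
Qed.

Lemma count_iota_downclosed (P : pred nat) n :
  (forall k, 1 <= k < n -> P k.+1 -> P k) ->
  forall k, 1 <= k <= n -> P k = (k <= count P (iota 1 n)).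
Proof.
elim: n => [|n IH] downP k kn; first lia.
have IH' := IH (fun k kn => downP k ltac:(lia)).
have := count_size P (iota 1 n); rewrite size_iota => cnt_le.
rewrite -[in iota _ n.+1](addn1 n) iotaD count_cat /= add1n addn0.
case Pn: (P n.+1) => /=.
- have P1n : forall k, 1 <= k <= n.+1 -> P k.
    by move=> k' k'n; apply: (downclosed_le _ _ downP _ _ k'n (leqnn _) Pn).
  rewrite (@eq_in_count _ _ predT) ?count_predT ?size_iota ?P1n //; first lia.
  by move=> x; rewrite mem_iota => xn; apply: P1n; lia.
- case: (eqVneq k n.+1) => [->|ne_kn]; first by rewrite Pn; lia.
  by rewrite addn0 IH' //; lia.
Qed.

Section CarrelEnds.
Variables (n : nat) (R : pred nat).

Local Notation qseq := (qseq n R).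
Local Notation qq := (qq n R).
Local Notation r := (rr n R).

Lemma mem_qseq x : (x \in qseq) = [&& 1 <= x, x < n & R x].
Proof. by rewrite /Defs.qseq mem_filter mem_iota; case: (R x); rewrite ?andbF ?andbT //=; lia. Qed.

Lemma sorted_qseq : sorted ltn qseq.
Proof. exact: sorted_filter ltn_trans _ _ (iota_ltn_sorted _ _). Qed.

Lemma nth_qseq_ltn i k : i < k < size qseq -> nth n qseq i < nth n qseq k.
Proof.
by move=> /andP[ik kq]; apply: (sorted_ltn_nth ltn_trans n sorted_qseq); rewrite ?inE //; lia.
Qed.

Lemma qq_bounds h : 1 <= h <= r ->
  [/\ 1 <= qq h, qq h < qq h.+1, qq h.+1 <= n, R (qq h) & qq h.+1 < n -> R (qq h.+1)].
Proof.
rewrite /rr; case: h => [|h] //= hs; rewrite /Defs.qq /=.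
move: (mem_nth n hs); rewrite mem_qseq => /and3P[a_gt0 a_n aR].
case: (ltnP h.+1 (size qseq)) => [h1s|h1s]; last by rewrite (nth_default _ h1s) ltnn; split.
move: (mem_nth n h1s); rewrite mem_qseq => /and3P[_ b_n bR].
by split => //; [apply: nth_qseq_ltn; rewrite ltnSn | apply: ltnW].
Qed.

Lemma notR_between_qq h x : 1 <= h <= r -> qq h < x < qq h.+1 -> ~~ R x.
Proof.
move=> hr x_btw; apply/negP => xR.
have [_ _ b_n _ _] := qq_bounds h hr.
have xs : x \in qseq by rewrite mem_qseq xR andbT; lia.
have kx := nth_index n xs; have ks : index x qseq < size qseq by rewrite index_mem.
move: x_btw b_n; rewrite /Defs.qq /= -kx; case: h hr => [|h] //=; rewrite /rr => hs + _.
set k := index x qseq in kx ks *.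
case: (ltngtP k h) => [kh|hk|->]; last by rewrite ltnn.
  by have := nth_qseq_ltn k h ltac:(lia); lia.
case: (ltngtP k h.+1) => [|h1k|->]; [lia | | by rewrite ltnn andbF].
by have := nth_qseq_ltn h.+1 k ltac:(lia); lia.
Qed.

Lemma qq_index x : 1 <= x < n -> R x -> exists2 h, 1 <= h <= r & qq h = x.
Proof.
move=> x_n xR; have xs : x \in qseq by rewrite mem_qseq xR andbT.
by exists (index x qseq).+1; rewrite /rr /Defs.qq /= ?index_mem ?nth_index.
Qed.

Lemma R_increasing_notR (g : nat -> nat) i :
  R_increasing n R g -> 1 <= i < n -> ~~ R i -> g i < g i.+1.
Proof.
move=> g_inc i_n iR.
have Eq : qseq = filter R (iota 1 i) ++ filter R (iota i.+1 (n.-1 - i)).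
  by rewrite /Defs.qseq -filter_cat -[i.+1]add1n -iotaD; congr (filter _ (iota _ _)); lia.
set s1 := filter R (iota 1 i) in Eq; set s2 := filter R (iota i.+1 (n.-1 - i)) in Eq.
have s1_lt : forall y, y \in s1 -> R y /\ y <= i.
  by move=> y; rewrite mem_filter mem_iota => /andP[-> /andP[_ ?]]; split => //; lia.
have s2_gt : forall y, y \in s2 -> i < y.
  by move=> y; rewrite mem_filter mem_iota => /andP[_ /andP[? _]].
clearbody s1 s2.
apply: (g_inc (size s1).+1); rewrite ?leqnn //.
- by rewrite /= ltnS /rr Eq size_cat leq_addr.
- rewrite /Defs.qq /=; case E1: (size s1) => [|k] /=; first lia.
  have k_s1 : k < size s1 by rewrite E1.
  have [kR k_i] := s1_lt _ (mem_nth n k_s1).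
  rewrite Eq nth_cat k_s1.
  by case: (ltngtP (nth n s1 k) i) k_i => // eq_i; rewrite -eq_i kR in iR.
- rewrite /Defs.qq /= Eq nth_cat ltnn subnn.
  case: s2 s2_gt {Eq} => [|y s2] /= s2_gt; first lia.
  by apply: s2_gt; rewrite inE eqxx.
Qed.

End CarrelEnds.

Section TwoColumns.
(* A and V stand for columns j + 1 and j of the row end max tableau, of lengths a and b. *)
Variables (g A V : nat -> nat) (a b d : nat).
Hypotheses (a_gt0 : 0 < a) (ab : a < b)
  (A_incr : forall i k, 1 <= i <= k -> k <= a -> A i + (k - i) <= A k)
  (A_last : A a = g a)
  (V_top : forall i, 1 <= i <= a -> V i = minn (A i) (i + d))
  (g_next : g a.+1 = a.+1 + d)
  (V_bottom : forall i, a < i <= b -> V i = g i)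
  (g_incr : forall i k, a < i <= k -> k <= b -> g i + (k - i) <= g k)
  (g_run : g a.+1 <= g a -> g a - d <= b /\ forall i, a < i <= g a - d -> g i = i + d).

Local Notation colA := (map A (iota 1 a)).
Local Notation colV := (map V (iota 1 b)).

(* Once A leaves the diagonal i + d at row i, every value above i + d up to g a occurs in V:
   below g (a + 1) on the diagonal in the top rows, from g (a + 1) on in the run of g. *)
Lemma mem_colV_above i y : 1 <= i <= a -> i + d < A i -> i + d < y <= g a -> y \in colV.
Proof.
move=> ia Ai_gt y_btw.
have Vy : V (y - d) = y.
  case: (leqP (g a.+1) y) => [ge_y|lt_y].
    have [_ run] := g_run ltac:(lia).
    by rewrite V_bottom ?(run (y - d)); lia.
  have := A_incr i (y - d) ltac:(lia) ltac:(lia).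
  by rewrite V_top; lia.
rewrite -Vy; apply: map_f; rewrite mem_iota.
case: (leqP (g a.+1) y) => [ge_y|lt_y]; last lia.
by have [run_b _] := g_run ltac:(lia); lia.
Qed.

Lemma colA_sub_colV : {subset colA <= colV}.
Proof.
move=> x /mapP[i]; rewrite mem_iota => ia ->.
have := A_incr i a ltac:(lia) (leqnn a).
case: (leqP (A i) (i + d)) => [Ai_le|Ai_gt] Aa.
  have -> : A i = V i by rewrite V_top; lia.
  by apply: map_f; rewrite mem_iota; lia.
by apply: (mem_colV_above i) => //; lia.
Qed.

Lemma colV_diff_upclosed x y : x \in colV -> x \notin colA -> x <= g a ->
  y \notin colA -> x < y <= g a -> y \in colV.
Proof.
move=> /mapP[i]; rewrite mem_iota => ib -> notA_Vi Vi_le _ y_btw.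
case: (leqP i a) => [ia|ai].
  have Vi := V_top i ltac:(lia).
  case: (leqP (A i) (i + d)) => [Ai_le|Ai_gt].
    by move: notA_Vi; rewrite Vi (minn_idPl Ai_le) map_f // mem_iota; lia.
  by apply: (mem_colV_above i) => //; lia.
have Vi := V_bottom i ltac:(lia); have := g_incr a.+1 i ltac:(lia) ltac:(lia).
rewrite g_next -Vi => Vi_ge.
by apply: (mem_colV_above a); rewrite ?A_last; lia.
Qed.

End TwoColumns.

Section Tableaux.
Variables (n : nat) (lam : nat -> nat).
Hypothesis lam_partition : is_partition n lam.

Local Notation R := (Rlam n lam).
Local Notation zeta := (zeta n lam).

Lemma lam_nonincr i k : 1 <= i <= k -> k <= n -> lam k <= lam i.
Proof.
move=> ik; elim: k ik => [|k IH] ik kn; first lia.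
case: (eqVneq i k.+1) => [->//|ne_ik].
have := lam_partition k ltac:(lia); have := IH ltac:(lia) ltac:(lia); lia.
Qed.

Lemma leq_zeta j k : 1 <= k <= n -> (k <= zeta j) = (j <= lam k).
Proof.
move=> kn; rewrite /Defs.zeta -(count_iota_downclosed (fun i => j <= lam i)) //.
by move=> i i_n /= le_j; have := lam_partition i i_n; lia.
Qed.

Lemma zeta_le j : zeta j <= n.
Proof. by have := count_size (fun i => j <= lam i) (iota 1 n); rewrite size_iota. Qed.

Lemma zeta0 : zeta 0 = n.
Proof. by rewrite /Defs.zeta (eq_count (a2 := predT)) ?count_predT ?size_iota. Qed.

Lemma zetaS_le j : zeta j.+1 <= zeta j.
Proof.
have [->//|z_gt0] := posnP (zeta j.+1).
have := leq_zeta j.+1 (zeta j.+1) ltac:(have := zeta_le j.+1; lia).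
rewrite leqnn => /esym le_lam.
rewrite leq_zeta; [lia | have := zeta_le j.+1; lia].
Qed.

Lemma RlamE i : 1 <= i < n -> R i = (lam i.+1 < lam i).
Proof.
move=> i_n; rewrite /Rlam (_ : i < n = true) /=; last lia.
apply/hasP/idP => [[j] | lt_lam].
- rewrite mem_iota => _ /eqP zj.
  have := leq_zeta j i ltac:(lia); have := leq_zeta j i.+1 ltac:(lia).
  rewrite zj leqnn ltnn; lia.
- exists (lam i); first by rewrite mem_iota; have := lam_nonincr 1 i ltac:(lia) ltac:(lia); lia.
  have := leq_zeta (lam i) i ltac:(lia); have := leq_zeta (lam i) i.+1 ltac:(lia).
  rewrite leqnn => ? ?; apply/eqP; lia.
Qed.

Lemma lam_eq_notRlam i k x : 1 <= i -> i <= x < k -> k <= n -> lam k = lam i -> ~~ R x.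
Proof.
move=> i_gt0 x_ik k_n lam_ki; rewrite RlamE; last lia.
have := lam_nonincr i x ltac:(lia) ltac:(lia).
have := lam_nonincr x.+1 k ltac:(lia) ltac:(lia).
lia.
Qed.

Lemma notRlam_lam_eq i k : 1 <= i <= k -> k <= n ->
  (forall x, i <= x < k -> ~~ R x) -> lam k = lam i.
Proof.
move=> ik; elim: k ik => [|k IH] ik kn notR; first lia.
case: (eqVneq i k.+1) => [->//|ne_ik].
have := IH ltac:(lia) ltac:(lia) (fun x x_ik => notR x ltac:(lia)).
have := notR k ltac:(lia); rewrite RlamE; last lia.
have := lam_partition k ltac:(lia); lia.
Qed.

Lemma tableau_col_incr T j i k : is_tableau n lam T -> 1 <= j <= lam 1 ->
  1 <= i <= k -> k <= zeta j -> T j i + (k - i) <= T j k.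
Proof.
case=> _ col_lt _ jl; elim: k => [|k IH] ik kz; first lia.
case: (eqVneq i k.+1) => [->|ne_ik]; first lia.
have := IH ltac:(lia) ltac:(lia); have := col_lt j k jl ltac:(lia) ltac:(lia); lia.
Qed.

Lemma tableau_row_mono T j j' k : is_tableau n lam T -> 1 <= j <= j' -> j' <= lam 1 ->
  1 <= k <= zeta j' -> T j k <= T j' k.
Proof.
case=> _ _ row_le jj'; elim: j' jj' => [|j' IH] jj' j'l kz; first lia.
case: (eqVneq j j'.+1) => [->//|ne_jj'].
have := IH ltac:(lia) ltac:(lia) ltac:(have := zetaS_le j'; lia).
have := row_le j' k ltac:(lia) ltac:(lia) ltac:(lia); lia.
Qed.

Lemma carrel_columns h a b : 1 <= h <= rr n R -> qq n R h = a -> qq n R h.+1 = b ->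
  [/\ zeta (lam b) = b, zeta (lam b).+1 = a, (lam b).+1 <= lam 1,
      forall x, a < x <= b -> lam x = lam b & 0 < a /\ a < b <= n].
Proof.
move=> hr ea eb; have [a_gt0 ab b_n aR bR] := qq_bounds n R h hr.
have notR_ab x : a < x < b -> ~~ R x by rewrite -ea -eb; apply: (notR_between_qq n R h x hr).
rewrite ea eb in a_gt0 ab b_n aR bR.
have lam_eq : forall x, a < x <= b -> lam x = lam b.
  move=> x xb; apply/esym/notRlam_lam_eq => [|//|y yb]; first lia.
  by apply: notR_ab; lia.
have lam_a : lam b < lam a.
  by have := lam_eq a.+1 ltac:(lia); have := RlamE a ltac:(lia); rewrite aR; lia.
split => //; last lia.
- apply/eqP; rewrite eqn_leq [b <= _]leq_zeta ?leqnn ?andbT; last lia.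
  case: (ltnP b n) => [b_lt|b_n']; last exact: leq_trans (zeta_le _) b_n'.
  have := RlamE b ltac:(lia); rewrite bR // => /esym lt_lam.
  by rewrite leqNgt leq_zeta -?ltnNge ?lt_lam //; lia.
- have a_zeta := leq_zeta (lam b).+1 a ltac:(lia).
  have a1_zeta := leq_zeta (lam b).+1 a.+1 ltac:(lia).
  rewrite lam_eq ?ltnn in a1_zeta; last lia.
  by apply/eqP; rewrite eqn_leq leqNgt a1_zeta a_zeta lam_a.
- by have := lam_nonincr 1 a ltac:(lia) ltac:(lia); lia.
Qed.

Variable g : nat -> nat.
Hypotheses (n_gt0 : 0 < n) (g_gapless : gapless n R g).

Lemma gapless_entries : is_Rtuple n g.
Proof. by case: g_gapless. Qed.

Lemma gapless_upper : upper n g.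
Proof. by case: g_gapless. Qed.

Lemma gapless_R_increasing : R_increasing n R g.
Proof. by case: g_gapless. Qed.

Lemma gapless_last : g n = n.
Proof. by have := gapless_entries n; have := gapless_upper n; lia. Qed.

Lemma g_incr_notR i k : 1 <= i <= k -> k <= n ->
  (forall y, i <= y < k -> ~~ R y) -> g i + (k - i) <= g k.
Proof.
move=> ik; elim: k ik => [|k IH] ik kn notR_ik; first lia.
case: (eqVneq i k.+1) => [->|ne_ik]; first lia.
have := IH ltac:(lia) ltac:(lia) (fun y yk => notR_ik y ltac:(lia)).
have := R_increasing_notR n R g k gapless_R_increasing ltac:(lia) (notR_ik k ltac:(lia)).
lia.
Qed.

Lemma gapless_lam0 i : 1 <= i <= n -> lam i = 0 -> g i = i.
Proof.
move=> i_n lam_i0.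
have lam_n : lam n = lam i by have := lam_nonincr i n i_n (leqnn n); lia.
have := g_incr_notR i n i_n (leqnn n) (fun y y_i => lam_eq_notRlam i n y ltac:(lia) y_i (leqnn n) lam_n).
by have := gapless_upper i i_n; rewrite gapless_last; lia.
Qed.

Lemma g_carrel_incr h a b i k : 1 <= h <= rr n R -> qq n R h = a -> qq n R h.+1 = b ->
  a < i <= k -> k <= b -> g i + (k - i) <= g k.
Proof.
move=> hr ea eb ik kb; have [_ _ _ _ [a_gt0 /andP[_ b_n]]] := carrel_columns h a b hr ea eb.
apply: g_incr_notR => [||y yk]; try lia.
by apply: (notR_between_qq n R h y hr); rewrite ea eb; lia.
Qed.

(* The gapless condition at q_h, reparametrised by d: from row a + 1 on, g follows the diagonal
   i + d until it reaches g a. *)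
Lemma gapless_run h a b : 1 <= h <= rr n R -> qq n R h = a -> qq n R h.+1 = b ->
  let d := g a.+1 - a.+1 in
  g a.+1 <= g a -> g a - d <= b /\ forall i, a < i <= g a - d -> g i = i + d.
Proof.
move=> hr ea eb d le_g; have [_ _ _ _ [a_gt0 /andP[ab b_n]]] := carrel_columns h a b hr ea eb.
have up_a1 := gapless_upper a.+1 ltac:(lia).
case: (ltnP (g a.+1) (g a)) => [lt_g|ge_g].
  case: g_gapless => _ _ _ /(_ h hr); rewrite /pp /= ea eb => /(_ lt_g) [s_le run].
  split => [|i ai]; first lia.
  by have := run (i - a) ltac:(lia); rewrite subnKC; lia.
by split => [|i ai]; [lia | have -> : i = a.+1 by lia]; lia.
Qed.

(* the row end max tableau M_lambda(g), in closed form *)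
Definition Mhat j i := i + range_min (fun k => g k - k) i (zeta j - i).

Lemma Mhat_ge j i : i <= Mhat j i.
Proof. exact: leq_addr. Qed.

Lemma Mhat_le j i k : i <= k <= zeta j -> Mhat j i <= i + (g k - k).
Proof. by move=> ik; rewrite leq_add2l range_min_le //; lia. Qed.

Lemma Mhat_witness j i : i <= zeta j -> exists2 k, i <= k <= zeta j & Mhat j i = i + (g k - k).
Proof.
move=> iz; rewrite /Mhat.
by have [k ik ->] := range_minP (fun k => g k - k) i (zeta j - i); exists k; lia.
Qed.

Lemma Mhat_tableau : is_tableau n lam Mhat.
Proof.
split.
- move=> j i jl iz; have z_n := zeta_le j.
  have := Mhat_le j i i ltac:(lia); have := Mhat_ge j i.
  have := gapless_entries i ltac:(lia); have := gapless_upper i ltac:(lia); lia.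
- move=> j i jl i_gt0 i_z; have [k ik ->] := Mhat_witness j i.+1 i_z.
  by have := Mhat_le j i k ltac:(lia); lia.
- move=> j i j_gt0 jl iz; have [k ik ->] := Mhat_witness j.+1 i ltac:(lia).
  by have := Mhat_le j i k ltac:(have := zetaS_le j; lia); lia.
Qed.

Lemma Mhat_rowend i : 1 <= i <= n -> rowend lam Mhat i = g i.
Proof.
move=> i_n; rewrite /rowend /ent.
case: eqP => [lam_i0|/eqP lam_i_gt0]; first by rewrite gapless_lam0.
have i_z : i <= zeta (lam i) by rewrite leq_zeta.
have [k ik Mk] := Mhat_witness (lam i) i i_z.
have := Mhat_le (lam i) i i ltac:(lia); rewrite Mk.
have k_n : k <= n by have := zeta_le (lam i); lia.
have lam_ki : lam k = lam i.
  by have := lam_nonincr i k ltac:(lia) k_n; have := leq_zeta (lam i) k ltac:(lia); lia.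
have := g_incr_notR i k ltac:(lia) k_n (fun y y_ik => lam_eq_notRlam i k y ltac:(lia) y_ik k_n lam_ki).
by have := gapless_upper i i_n; have := gapless_upper k ltac:(lia); lia.
Qed.

Lemma rowend_le_Mhat T : is_tableau n lam T ->
  (forall i, 1 <= i <= n -> rowend lam T i = g i) -> tab_le n lam T Mhat.
Proof.
move=> T_tab T_row j i jl iz.
have [k ik ->] := Mhat_witness j i ltac:(lia).
have k_n : k <= n by have := zeta_le j; lia.
have j_lam : j <= lam k by rewrite -leq_zeta; lia.
have lam_k1 := lam_nonincr 1 k ltac:(lia) k_n.
have T_k : T (lam k) k = g k.
  by have := T_row k ltac:(lia); rewrite /rowend /ent; case: eqP => //; lia.
have := tableau_col_incr T j i k T_tab jl ltac:(lia) ltac:(lia).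
have := tableau_row_mono T j (lam k) k T_tab ltac:(lia) lam_k1 ltac:(rewrite leq_zeta; lia).
by have := gapless_upper k ltac:(lia); lia.
Qed.

Lemma rowend_max_Mhat M j i : is_rowend_max n lam g M ->
  j <= lam 1 -> 1 <= i <= zeta j -> ent M j i = Mhat j i.
Proof.
case=> M_tab M_row M_max jl iz; rewrite /ent; case: eqP => [j0|/eqP j_gt0].
  have := Mhat_le j i n; rewrite j0 zeta0 gapless_last subnn addn0 in iz *.
  by have := Mhat_ge 0 i; lia.
apply/eqP; rewrite eqn_leq rowend_le_Mhat ?M_max //; try lia.
- exact: Mhat_tableau.
- exact: Mhat_rowend.
Qed.

Lemma colB_rowend_max M j : is_rowend_max n lam g M -> j <= lam 1 ->
  colB n lam M j = map (Mhat j) (iota 1 (zeta j)).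
Proof.
move=> M_max jl; apply/eq_in_map => i; rewrite mem_iota => i_z.
by apply: rowend_max_Mhat => //; lia.
Qed.

Lemma Mhat_last j : 0 < zeta j -> Mhat j (zeta j) = g (zeta j).
Proof.
move=> z_gt0; rewrite /Mhat subnn /=.
by have := gapless_upper (zeta j) ltac:(have := zeta_le j; lia); lia.
Qed.

Section Carrel.
Variables (h a b : nat).
Hypotheses (hr : 1 <= h <= rr n R) (qa : qq n R h = a) (qb : qq n R h.+1 = b).

Lemma Mhat_carrel_top i : 1 <= i <= a ->
  Mhat (lam b) i = minn (Mhat (lam b).+1 i) (i + (g a.+1 - a.+1)).
Proof.
move=> ia; have [zb za _ _ [a_gt0 /andP[ab b_n]]] := carrel_columns h a b hr qa qb.
have [k ik Ak] := Mhat_witness (lam b).+1 i ltac:(lia).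
have [k' ik' Vk'] := Mhat_witness (lam b) i ltac:(lia).
have := Mhat_le (lam b) i k ltac:(lia); have := Mhat_le (lam b) i a.+1 ltac:(lia).
rewrite Ak Vk'; case: (leqP k' a) => [k'a|ak'].
  by have := Mhat_le (lam b).+1 i k' ltac:(lia); rewrite Ak; lia.
have := g_carrel_incr h a b a.+1 k' hr qa qb ltac:(lia) ltac:(lia).
by have := gapless_upper k' ltac:(lia); lia.
Qed.

Lemma Mhat_carrel_bottom i : a < i <= b -> Mhat (lam b) i = g i.
Proof.
move=> ib; have [zb _ _ _ [a_gt0 /andP[ab b_n]]] := carrel_columns h a b hr qa qb.
have [k ik Vk] := Mhat_witness (lam b) i ltac:(lia).
have := Mhat_le (lam b) i i ltac:(lia); rewrite Vk.
have := g_carrel_incr h a b i k hr qa qb ltac:(lia) ltac:(lia).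
by have := gapless_upper i ltac:(lia); have := gapless_upper k ltac:(lia); lia.
Qed.

Lemma Mhat_carrel_columns :
  let colA := map (Mhat (lam b).+1) (iota 1 a) in
  let colV := map (Mhat (lam b)) (iota 1 b) in
  {subset colA <= colV} /\
  forall x y, x \in colV -> x \notin colA -> x <= g a -> y \notin colA -> x < y <= g a -> y \in colV.
Proof.
have [zb za l1 _ [a_gt0 /andP[ab b_n]]] := carrel_columns h a b hr qa qb.
have A_incr i k : 1 <= i <= k -> k <= a -> Mhat (lam b).+1 i + (k - i) <= Mhat (lam b).+1 k.
  by move=> ik ka; apply: tableau_col_incr Mhat_tableau _ ik _; rewrite ?za; lia.
have A_last : Mhat (lam b).+1 a = g a by rewrite -za Mhat_last // za.
have g_next : g a.+1 = a.+1 + (g a.+1 - a.+1) by have := gapless_upper a.+1 ltac:(lia); lia.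
have V_top := Mhat_carrel_top; have V_bottom := Mhat_carrel_bottom.
have g_incr i k := g_carrel_incr h a b i k hr qa qb.
have g_run := gapless_run h a b hr qa qb.
split.
- exact: (colA_sub_colV _ _ _ _ _ _ a_gt0 ab A_incr A_last V_top g_next V_bottom g_run).
- exact: (colV_diff_upclosed _ _ _ _ _ _ a_gt0 ab A_incr A_last V_top g_next V_bottom g_incr g_run).
Qed.

Lemma rowend_max_carrel M : is_rowend_max n lam g M ->
  ent M (lam b).+1 a = g a /\
  (let S := [seq x <- iota 1 n |
               [&& x \in colB n lam M (lam b), x \notin colB n lam M (lam b).+1 & x < g a]] in
   let X := [seq x <- iota 1 (g a) | x \notin colB n lam M (lam b).+1] in
   S = drop (size X - size S) X).
Proof.
move=> M_max; have [zb za jl _ [a_gt0 /andP[ab b_n]]] := carrel_columns h a b hr qa qb.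
have [_ upclosed] := Mhat_carrel_columns.
have ent_a : ent M (lam b).+1 a = g a.
  by rewrite rowend_max_Mhat // -?za ?Mhat_last ?za //; lia.
split=> //; apply: diff_suffix_complement.
- by have := gapless_entries a ltac:(lia); lia.
- by rewrite -ent_a /colB za map_f // mem_iota; lia.
- move=> x; rewrite colB_rowend_max //; last lia.
  by case/mapP=> i; rewrite mem_iota => i_z ->; have := Mhat_ge (lam b) i; lia.
- by rewrite !colB_rowend_max ?zb ?za // ltnW.
Qed.

End Carrel.

Lemma colB_succ_subset M j : is_rowend_max n lam g M -> j < lam 1 ->
  {subset colB n lam M j.+1 <= colB n lam M j}.
Proof.
move=> M_max jl; rewrite !colB_rowend_max //; last exact: ltnW.
have [z_eq|z_ne] := eqVneq (zeta j.+1) (zeta j); first by rewrite /Mhat z_eq.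
set a := zeta j.+1 in z_ne *.
have a_lt : a < zeta j by rewrite ltn_neqAle z_ne zetaS_le.
have a_gt0 : 0 < a by rewrite leq_zeta //; lia.
have a_n : a < n by have := zeta_le j; lia.
have lam_a : j.+1 <= lam a by rewrite -leq_zeta ?leqnn //; lia.
have lam_a1 : lam a.+1 = j.
  have := leq_zeta j.+1 a.+1 ltac:(lia); have := leq_zeta j a.+1 ltac:(lia).
  by rewrite -/a ltnn a_lt; lia.
have aR : R a by rewrite RlamE; lia.
have [h hr qa] := qq_index n R a ltac:(lia) aR.
have [zb _ _ lam_eq _] := carrel_columns h a (qq n R h.+1) hr qa erefl.
have lam_b : lam (qq n R h.+1) = j.
  by rewrite -lam_a1 lam_eq //; have [_ ? ? _ _] := qq_bounds n R h hr; lia.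
have [sub _] := Mhat_carrel_columns h a _ hr qa erefl.
by rewrite lam_b in sub zb; rewrite zb.
Qed.

Lemma rowend_max_key M : is_rowend_max n lam g M -> is_key n lam M.
Proof.
move=> M_max; split; first by case: M_max.
move=> l j l_gt0; elim: j => [|j IH] lj jl; first lia.
case: (eqVneq l j.+1) => [->//|ne_lj] x xj.
by apply: IH; [lia | lia | exact: colB_succ_subset xj].
Qed.

End Tableaux.

Theorem lemma5p1 (n : nat) (lam : nat -> nat) (g : nat -> nat) (M : nat -> nat -> nat) :
  1 <= n ->
  is_partition n lam ->
  gapless n (Rlam n lam) g ->
  is_rowend_max n lam g M ->
  is_key n lam M /\
  (forall h, 1 <= h <= rr n (Rlam n lam) ->
     let qh := qq n (Rlam n lam) h in
     let j := lam (qq n (Rlam n lam) h.+1) in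
     ent M j.+1 qh = g qh /\
     (let S := [seq x <- iota 1 n |
                  [&& x \in colB n lam M j, x \notin colB n lam M j.+1 & x < g qh]] in
      let X := [seq x <- iota 1 (g qh) | x \notin colB n lam M j.+1] in
      S = drop (size X - size S) X)).
Proof.
move=> n_gt0 lam_part g_gapless M_max; split.
  exact: (rowend_max_key n lam lam_part g n_gt0 g_gapless M M_max).
move=> h hr.
exact: (rowend_max_carrel n lam lam_part g n_gt0 g_gapless h _ _ hr erefl erefl M M_max).
Qed.
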